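(* Let $k_1<\tfrac12$. Let $J'=(z_w,z_w')$ be a nonempty open interval, let $r:J'\to\mathbb{R}$ be differentiable, and let $h:J'\to\mathbb{R}$ be differentiable with $\dot h(z)=1+h(z)^2-2r(z)h(z)$ on $J'$, having exactly one zero $z_*\in J'$. Let $G(z)=z-\dfrac{2h(z)}{2+h(z)^2-2r(z)h(z)}$ and $z_{n+1}=G(z_n)$. (1) If $r(z)>0$ and $\dot r(z)<k_1$ for all $z\in(z_w,z_* )$, then for every $z_0\in(z_w,z_* )$ the iterates are well defined and $(z_n)$ increases monotonically to $z_*$. (2) If $r(z)<0$ and $\dot r(z)<k_1$ for all $z\in(z_*,z_w')$, then for every $z_0\in(z_*,z_w')$ the iterates are well defined and $(z_n)$ decreases monotonically to $z_*$.
   Context: $\dot{}$ denotes differentiation with respect to $z$. Here $h<0$ on $(z_w,z_* )$ and $h>0$ on $(z_*,z_w')$. *)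

From Stdlib Require Import Reals.
Open Scope R_scope.

Definition Gden (r h : R -> R) (z : R) : R := 2 + h z ^ 2 - 2 * r z * h z.

Definition Gmap (r h : R -> R) (z : R) : R := z - 2 * h z / Gden r h z.

Definition Giter (r h : R -> R) (z0 : R) (n : nat) : R := Nat.iter n (Gmap r h) z0.

(* Since h' = 1 at its only zero z_*, h has the sign of z - z_* on J', so on
   either side the hypothesis on r gives r h < 0.  There the denominator
   2 + h^2 - 2 r h of G is positive, G(z) - z = -2h/(2 + h^2 - 2 r h) has the
   sign of z_* - z, and
     G' = h^2 (2 - 4 r' + 3 h^2 - 8 r h + 4 r^2) / (2 + h^2 - 2 r h)^2 > 0,
   so G(z) lies strictly between z and the fixed point z_*.  The iterates are
   thus monotone and bounded; their limit is a fixed point of the continuous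
   map G, and the only fixed point in reach is z_*. *)

From Stdlib Require Import Reals Lra Psatz.
From Coquelicot Require Import Coquelicot.
Open Scope R_scope.

Lemma derivative_pos_sign_near (f : R -> R) (c l : R) :
  derivable_pt_lim f c l -> 0 < l -> f c = 0 ->
  exists del : posreal, forall t, t <> 0 -> Rabs t < del -> 0 < f (c + t) * t.
Proof.
  intros Hd Hl Hfc.
  destruct (Hd (l / 2) ltac:(lra)) as [del Hdel].
  exists del; intros t Ht0 Ht.
  specialize (Hdel t Ht0 Ht); rewrite Hfc, Rminus_0_r in Hdel.
  apply Rabs_def2 in Hdel.
  assert (Hq : 0 < f (c + t) / t) by lra.
  replace (f (c + t) * t) with (f (c + t) / t * (t * t)) by (field; exact Ht0).
  apply Rmult_lt_0_compat; [exact Hq | nra].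
Qed.

Lemma no_root_same_sign (f : R -> R) (x y : R) :
  x <= y -> (forall t, x <= t <= y -> continuity_pt f t) ->
  (forall t, x <= t <= y -> f t <> 0) -> 0 < f x * f y.
Proof.
  intros Hxy Hc Hnz.
  assert (Hx := Hnz x ltac:(lra)); assert (Hy := Hnz y ltac:(lra)).
  destruct (Rle_lt_or_eq_dec x y Hxy) as [Hlt | <-]; [| nra].
  destruct (Rlt_or_le 0 (f x * f y)) as [Hpos | Hle]; [exact Hpos | exfalso].
  assert (Hopp : (f x < 0 /\ 0 < f y) \/ (0 < f x /\ f y < 0)).
  { destruct (Rtotal_order (f x) 0) as [|[|]]; destruct (Rtotal_order (f y) 0) as [|[|]];
      solve [tauto | nra]. }
  destruct Hopp as [[Hfx Hfy] | [Hfx Hfy]].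
  - destruct (Ranalysis5.IVT_interv f x y Hc Hlt Hfx Hfy) as [t [Ht Hft]].
    exact (Hnz t Ht Hft).
  - destruct (Ranalysis5.IVT_interv (fun t => - f t) x y) as [t [Ht Hft]];
      [intros t Ht; exact (continuity_pt_opp _ _ (Hc t Ht)) | exact Hlt | lra | lra |].
    apply (Hnz t Ht); lra.
Qed.

Lemma simple_root_sign (f : R -> R) (a b c l : R) :
  (forall t, a < t < b -> continuity_pt f t) ->
  a < c < b -> derivable_pt_lim f c l -> 0 < l -> f c = 0 ->
  (forall t, a < t < b -> f t = 0 -> t = c) ->
  forall z, a < z < b -> z <> c -> 0 < f z * (z - c).
Proof.
  intros Hc Hcab Hd Hl Hfc Huniq z Hz Hzc.
  destruct (derivative_pos_sign_near f c l Hd Hl Hfc) as [del Hdel].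
  assert (Hdel0 := cond_pos del).
  assert (Hnz : forall t, a < t < b -> t <> c -> f t <> 0)
    by (intros t Ht Htc Hft; exact (Htc (Huniq t Ht Hft))).
  destruct (Rlt_or_le z c) as [Hlt | Hge].
  - set (d := Rmin (del / 2) (c - z)).
    assert (Hd1 : d <= del / 2) by apply Rmin_l.
    assert (Hd2 : d <= c - z) by apply Rmin_r.
    assert (Hd0 : 0 < d) by (apply Rmin_pos; lra).
    assert (Hp : 0 < f (c + - d) * - d)
      by (apply Hdel; [lra | rewrite Rabs_Ropp, Rabs_pos_eq; lra]).
    assert (Hzp : 0 < f z * f (c + - d)).
    { apply no_root_same_sign; [lra | intros t Ht; apply Hc | intros t Ht; apply Hnz]; lra. }
    assert (Hfp : f (c + - d) < 0) by nra.
    assert (Hfz : f z < 0) by nra.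
    nra.
  - set (d := Rmin (del / 2) (z - c)).
    assert (Hd1 : d <= del / 2) by apply Rmin_l.
    assert (Hd2 : d <= z - c) by apply Rmin_r.
    assert (Hd0 : 0 < d) by (apply Rmin_pos; lra).
    assert (Hp : 0 < f (c + d) * d)
      by (apply Hdel; [lra | rewrite Rabs_pos_eq; lra]).
    assert (Hzp : 0 < f (c + d) * f z).
    { apply no_root_same_sign; [lra | intros t Ht; apply Hc | intros t Ht; apply Hnz]; lra. }
    assert (Hfp : 0 < f (c + d)) by nra.
    assert (Hfz : 0 < f z) by nra.
    nra.
Qed.

Lemma Un_cv_le_bound (u : nat -> R) (l b : R) :
  Un_cv u l -> (forall n, u n <= b) -> l <= b.
Proof.
  intros Hu Hb.
  apply (Rle_cv_lim (Vn := fun _ => b) Hb Hu).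
  intros e He; exists 0%nat; intros n _.
  unfold R_dist; rewrite Rminus_diag, Rabs_R0; exact He.
Qed.

Lemma iter_limit_fixpoint (G : R -> R) (z0 l : R) :
  continuity_pt G l -> Un_cv (fun n => Nat.iter n G z0) l -> G l = l.
Proof.
  intros HG Hu.
  apply (UL_sequence (fun n => Nat.iter (S n) G z0)).
  - exact (continuity_seq G _ l HG Hu).
  - intros e He; destruct (Hu e He) as [N HN].
    exists N; intros n Hn; apply HN; lia.
Qed.

Lemma iter_increasing_to_fixpoint (G : R -> R) (a c : R) :
  (forall z, a < z < c -> z < G z < c) ->
  (forall z, a < z < c -> continuity_pt G z) ->
  forall z0, a < z0 < c ->
    (forall n, z0 <= Nat.iter n G z0 < c) /\
    Un_growing (fun n => Nat.iter n G z0) /\ Un_cv (fun n => Nat.iter n G z0) c.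
Proof.
  intros HG Hc z0 Hz0.
  set (u := fun n => Nat.iter n G z0).
  assert (Hb : forall n, z0 <= u n < c).
  { induction n as [|n IH]; [cbn; lra |].
    change (z0 <= G (u n) < c); destruct (HG (u n)); lra. }
  assert (Hg : Un_growing u).
  { intros n; change (u n <= G (u n)).
    destruct (HG (u n)); [specialize (Hb n); lra | lra]. }
  destruct (growing_cv u Hg) as [l Hl].
  { exists c; intros x [n ->]; destruct (Hb n); lra. }
  assert (Hlc : l <= c).
  { apply (Un_cv_le_bound u); [exact Hl | intros n; destruct (Hb n); lra]. }
  assert (Hz0l : z0 <= l) by exact (growing_ineq u l Hg Hl 0).
  repeat split; try apply Hb; [exact Hg |].
  destruct (Rle_lt_or_eq_dec l c Hlc) as [Hlt | <-]; [exfalso | exact Hl].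
  assert (Hfix : G l = l) by exact (iter_limit_fixpoint G z0 l (Hc l ltac:(lra)) Hl).
  destruct (HG l ltac:(lra)); lra.
Qed.

Lemma iter_decreasing_to_fixpoint (G : R -> R) (c b : R) :
  (forall z, c < z < b -> c < G z < z) ->
  (forall z, c < z < b -> continuity_pt G z) ->
  forall z0, c < z0 < b ->
    (forall n, c < Nat.iter n G z0 <= z0) /\
    Un_decreasing (fun n => Nat.iter n G z0) /\ Un_cv (fun n => Nat.iter n G z0) c.
Proof.
  intros HG Hc z0 Hz0.
  set (u := fun n => Nat.iter n G z0).
  assert (Hb : forall n, c < u n <= z0).
  { induction n as [|n IH]; [cbn; lra |].
    change (c < G (u n) <= z0); destruct (HG (u n)); lra. }
  assert (Hd : Un_decreasing u).
  { intros n; change (G (u n) <= u n).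
    destruct (HG (u n)); [specialize (Hb n); lra | lra]. }
  destruct (decreasing_cv u Hd) as [l Hl].
  { exists (- c); intros x [n ->]; unfold opp_seq; destruct (Hb n); lra. }
  assert (Hcl : c <= l).
  { apply Ropp_le_cancel, (Un_cv_le_bound (opp_seq u)); [exact (CV_opp u l Hl) |].
    intros n; unfold opp_seq; destruct (Hb n); lra. }
  assert (Hlz0 : l <= z0) by exact (decreasing_ineq u l Hd Hl 0).
  repeat split; try apply Hb; [exact Hd |].
  destruct (Rle_lt_or_eq_dec c l Hcl) as [Hlt | ->]; [exfalso | exact Hl].
  assert (Hfix : G l = l) by exact (iter_limit_fixpoint G z0 l (Hc l ltac:(lra)) Hl).
  destruct (HG l ltac:(lra)); lra.
Qed.

Definition Gnum (r dr h : R -> R) (z : R) : R :=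
  h z ^ 2 * (2 - 4 * dr z + 3 * h z ^ 2 - 8 * r z * h z + 4 * r z ^ 2).

Lemma Gden_pos (r h : R -> R) (z : R) : r z * h z <= 0 -> 0 < Gden r h z.
Proof. intros Hrh; unfold Gden; nra. Qed.

Lemma Gnum_pos (r dr h : R -> R) (z : R) :
  r z * h z < 0 -> dr z < 1 / 2 -> 0 < Gnum r dr h z.
Proof.
  intros Hrh Hdr; unfold Gnum.
  assert (Hh2 : 0 < h z ^ 2) by nra.
  apply Rmult_lt_0_compat; nra.
Qed.

Lemma Gmap_root (r h : R -> R) (z : R) : h z = 0 -> Gmap r h z = z.
Proof. intros Hz; unfold Gmap, Gden; rewrite Hz; field. Qed.

Section NewtonStep.

Variables (r dr h : R -> R) (zw zw' zs : R).
Hypothesis Hr : forall z, zw < z < zw' -> derivable_pt_lim r z (dr z).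
Hypothesis Hh : forall z, zw < z < zw' ->
  derivable_pt_lim h z (1 + h z ^ 2 - 2 * r z * h z).
Hypothesis Hzs : zw < zs < zw'.
Hypothesis Hhzs : h zs = 0.
Hypothesis Huniq : forall z, zw < z < zw' -> h z = 0 -> z = zs.

Lemma derivable_pt_lim_Gmap (z : R) : zw < z < zw' -> Gden r h z <> 0 ->
  derivable_pt_lim (Gmap r h) z (Gnum r dr h z / Gden r h z ^ 2).
Proof.
  intros Hz HD.
  assert (Hrz := proj2 (is_derive_Reals _ _ _) (Hr z Hz)).
  assert (Hhz := proj2 (is_derive_Reals _ _ _) (Hh z Hz)).
  apply is_derive_Reals; unfold Gmap, Gden, Gnum in *.
  auto_derive.
  - repeat split; try (eexists; eassumption); exact HD.
    replace (Derive (fun x => h x) z) with (1 + h z ^ 2 - 2 * r z * h z)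
      by (symmetry; exact (is_derive_unique _ _ _ Hhz)).
    replace (Derive (fun x => r x) z) with (dr z)
      by (symmetry; exact (is_derive_unique _ _ _ Hrz)).
    field; exact HD.
Qed.

Lemma continuity_pt_Gmap (z : R) : zw < z < zw' -> Gden r h z <> 0 ->
  continuity_pt (Gmap r h) z.
Proof.
  intros Hz HD; apply derivable_continuous_pt.
  exact (exist _ _ (derivable_pt_lim_Gmap z Hz HD)).
Qed.

Lemma Gmap_lt (x y : R) : zw < x -> x < y -> y < zw' ->
  (forall t, x <= t <= y -> r t * h t <= 0) ->
  (forall t, x < t < y -> r t * h t < 0 /\ dr t < 1 / 2) ->
  Gmap r h x < Gmap r h y.
Proof.
  intros Hx Hxy Hy Hle Hlt.
  destruct (MVT_cor2 (Gmap r h) (fun t => Gnum r dr h t / Gden r h t ^ 2) x y Hxy)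
    as [c [Hmvt Hc]].
  - intros t Ht; apply derivable_pt_lim_Gmap; [lra |].
    exact (Rgt_not_eq _ _ (Gden_pos r h t (Hle t Ht))).
  - destruct (Hlt c Hc) as [Hrh Hdr].
    assert (Hslope : 0 < Gnum r dr h c / Gden r h c ^ 2).
    { apply Rdiv_lt_0_compat; [exact (Gnum_pos r dr h c Hrh Hdr) |].
      apply pow_lt, Gden_pos; lra. }
    nra.
Qed.

Lemma h_sign (z : R) : zw < z < zw' -> z <> zs -> 0 < h z * (z - zs).
Proof.
  apply (simple_root_sign h zw zw' zs 1); try assumption; [| | lra].
  - intros t Ht; apply derivable_continuous_pt; exact (exist _ _ (Hh t Ht)).
  - replace 1 with (1 + h zs ^ 2 - 2 * r zs * h zs) by (rewrite Hhzs; ring).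
    exact (Hh zs Hzs).
Qed.

Lemma Gmap_step_left : (forall z, zw < z < zs -> 0 < r z /\ dr z < 1 / 2) ->
  forall z, zw < z < zs -> 0 < Gden r h z /\ z < Gmap r h z < zs.
Proof.
  intros Hside.
  assert (Hhneg : forall t, zw < t < zs -> h t < 0).
  { intros t Ht; assert (Hs := h_sign t ltac:(lra) ltac:(lra)); nra. }
  assert (Hrh : forall t, zw < t < zs -> r t * h t < 0).
  { intros t Ht; destruct (Hside t Ht); assert (Hh0 := Hhneg t Ht); nra. }
  intros z Hz.
  assert (HD : 0 < Gden r h z) by (apply Gden_pos; assert (Hrhz := Hrh z Hz); lra).
  split; [exact HD | split].
  - assert (Hh0 := Hhneg z Hz).
    assert (0 < / Gden r h z) by (apply Rinv_0_lt_compat; exact HD).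
    unfold Gmap, Rdiv; nra.
  - rewrite <- (Gmap_root r h zs Hhzs).
    apply Gmap_lt; try lra.
    + intros t Ht; destruct (Req_dec t zs) as [-> | Hne].
      * rewrite Hhzs; lra.
      * assert (Hrht := Hrh t ltac:(lra)); lra.
    + intros t Ht; split; [apply Hrh | apply Hside]; lra.
Qed.

Lemma Gmap_step_right : (forall z, zs < z < zw' -> r z < 0 /\ dr z < 1 / 2) ->
  forall z, zs < z < zw' -> 0 < Gden r h z /\ zs < Gmap r h z < z.
Proof.
  intros Hside.
  assert (Hhpos : forall t, zs < t < zw' -> 0 < h t).
  { intros t Ht; assert (Hs := h_sign t ltac:(lra) ltac:(lra)); nra. }
  assert (Hrh : forall t, zs < t < zw' -> r t * h t < 0).
  { intros t Ht; destruct (Hside t Ht); assert (Hh0 := Hhpos t Ht); nra. }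
  intros z Hz.
  assert (HD : 0 < Gden r h z) by (apply Gden_pos; assert (Hrhz := Hrh z Hz); lra).
  split; [exact HD | split].
  - rewrite <- (Gmap_root r h zs Hhzs).
    apply Gmap_lt; try lra.
    + intros t Ht; destruct (Req_dec t zs) as [-> | Hne].
      * rewrite Hhzs; lra.
      * assert (Hrht := Hrh t ltac:(lra)); lra.
    + intros t Ht; split; [apply Hrh | apply Hside]; lra.
  - assert (Hh0 := Hhpos z Hz).
    assert (0 < / Gden r h z) by (apply Rinv_0_lt_compat; exact HD).
    unfold Gmap, Rdiv; nra.
Qed.

Lemma Giter_left : (forall z, zw < z < zs -> 0 < r z /\ dr z < 1 / 2) ->
  forall z0, zw < z0 < zs ->
    (forall n, zw < Giter r h z0 n < zw' /\ Gden r h (Giter r h z0 n) <> 0) /\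
    Un_growing (Giter r h z0) /\ Un_cv (Giter r h z0) zs.
Proof.
  intros Hside z0 Hz0.
  assert (Hstep := Gmap_step_left Hside).
  destruct (iter_increasing_to_fixpoint (Gmap r h) zw zs) with (z0 := z0)
    as [Hb [Hg Hcv]]; [apply Hstep | | exact Hz0 |].
  { intros z Hz; destruct (Hstep z Hz); apply continuity_pt_Gmap; lra. }
  split; [| split; [exact Hg | exact Hcv]].
  intros n; unfold Giter; destruct (Hb n).
  destruct (Hstep (Nat.iter n (Gmap r h) z0)); [lra | split; lra].
Qed.

Lemma Giter_right : (forall z, zs < z < zw' -> r z < 0 /\ dr z < 1 / 2) ->
  forall z0, zs < z0 < zw' ->
    (forall n, zw < Giter r h z0 n < zw' /\ Gden r h (Giter r h z0 n) <> 0) /\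
    Un_decreasing (Giter r h z0) /\ Un_cv (Giter r h z0) zs.
Proof.
  intros Hside z0 Hz0.
  assert (Hstep := Gmap_step_right Hside).
  destruct (iter_decreasing_to_fixpoint (Gmap r h) zs zw') with (z0 := z0)
    as [Hb [Hd Hcv]]; [apply Hstep | | exact Hz0 |].
  { intros z Hz; destruct (Hstep z Hz); apply continuity_pt_Gmap; lra. }
  split; [| split; [exact Hd | exact Hcv]].
  intros n; unfold Giter; destruct (Hb n).
  destruct (Hstep (Nat.iter n (Gmap r h) z0)); [lra | split; lra].
Qed.

End NewtonStep.

Theorem theorem3p6
  (k1 zw zw' zs : R) (r dr h : R -> R)
  (Hk1 : k1 < 1 / 2)
  (Hint : zw < zw')
  (Hr : forall z, zw < z < zw' -> derivable_pt_lim r z (dr z))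
  (Hh : forall z, zw < z < zw' ->
          derivable_pt_lim h z (1 + h z ^ 2 - 2 * r z * h z))
  (Hzs : zw < zs < zw')
  (Hhzs : h zs = 0)
  (Huniq : forall z, zw < z < zw' -> h z = 0 -> z = zs) :
  ((forall z, zw < z < zs -> 0 < r z /\ dr z < k1) ->
     forall z0, zw < z0 < zs ->
       (forall n, zw < Giter r h z0 n < zw' /\ Gden r h (Giter r h z0 n) <> 0) /\
       Un_growing (Giter r h z0) /\ Un_cv (Giter r h z0) zs)
  /\
  ((forall z, zs < z < zw' -> r z < 0 /\ dr z < k1) ->
     forall z0, zs < z0 < zw' ->
       (forall n, zw < Giter r h z0 n < zw' /\ Gden r h (Giter r h z0 n) <> 0) /\
       Un_decreasing (Giter r h z0) /\ Un_cv (Giter r h z0) zs).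
Proof.
  split; intros Hside.
  - apply (Giter_left r dr h zw zw' zs Hr Hh Hzs Hhzs Huniq).
    intros z Hz; destruct (Hside z Hz); split; lra.
  - apply (Giter_right r dr h zw zw' zs Hr Hh Hzs Hhzs Huniq).
    intros z Hz; destruct (Hside z Hz); split; lra.
Qed.
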